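(* Let $\Lambda\in\mathbb{N}$ and let $k$ be a real number with $k\ge\Lambda^2(\Lambda+1)^2$. For $\alpha\in[0,2\pi)$ and $\beta=(\beta_{-\Lambda},\dots,\beta_\Lambda)\in\mathbb{R}^{2\Lambda+1}$ let $$\bm{\omega}_\alpha^\beta:=\sum_{m=-\Lambda}^{\Lambda}\frac{e^{i(\alpha m+\beta_m)}}{\sqrt{2\Lambda+1}}\psi_m,\qquad P_\alpha^\beta:=\bm{\omega}_\alpha^\beta\langle\bm{\omega}_\alpha^\beta,\cdot\rangle.$$ Then: (i) $I=\frac{2\Lambda+1}{2\pi}\int_0^{2\pi}d\alpha\,P_\alpha^\beta$ for every $\beta$; (ii) on every $\bm{\omega}_\alpha^\beta$, $\langle L\rangle=0$ and $(\Delta L)^2=\Lambda(\Lambda+1)/3$; (iii) for all $\alpha,\beta$, $(\Delta\bm{x})^2_{\bm{\omega}_\alpha^\beta}\ge(\Delta\bm{x})^2_{\bm{\omega}_\alpha^0}$, and $$(\Delta\bm{x})^2_{\bm{\omega}_\alpha^0}<\frac{1}{\Lambda+1}\left(\frac12+\frac{1}{3\Lambda}\right),$$ which is $\le \frac{2}{3(\Lambda+1)}$ when $\Lambda\ge2$.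
   Context: (Fuzzy circle $S^1_\Lambda$.) $\mathcal{H}_\Lambda$ is a $(2\Lambda+1)$-dimensional Hilbert space with orthonormal basis $\{\psi_n\}_{n=-\Lambda}^{\Lambda}$ (inner product antilinear in the first argument). Operators: $L\psi_n=n\psi_n$; $x_+\psi_n=b_{n+1}\psi_{n+1}$, $x_-\psi_n=b_n\psi_{n-1}$, where $b_n=\sqrt{1+n(n-1)/k}$ if $1-\Lambda\le n\le\Lambda$ and $b_n=0$ otherwise (so the undefined vectors $\psi_{\pm(\Lambda+1)}$ never occur with nonzero coefficient); $x_1=(x_++x_-)/2$, $x_2=(x_+-x_-)/(2i)$, $\bm{x}^2=x_1^2+x_2^2$. For a unit vector $\bm{\chi}$, $\langle A\rangle=\langle\bm{\chi},A\bm{\chi}\rangle$, $(\Delta L)^2=\langle L^2\rangle-\langle L\rangle^2$, and $(\Delta\bm{x})^2_{\bm\chi}=\langle\bm{x}^2\rangle-\langle x_1\rangle^2-\langle x_2\rangle^2$. *)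

From Stdlib Require Import Reals ZArith.
From Coquelicot Require Import Coquelicot.

Open Scope R_scope.

(* Vectors of H_Lambda: coordinates w.r.t. the orthonormal basis psi_n,
   indexed by n : Z; only the coordinates -Lambda <= n <= Lambda matter. *)
Definition vec := Z -> C.

Definition sumZ (Lam : nat) (f : Z -> C) : C :=
  @sum_n_m C_AbelianGroup (fun j : nat => f (Z.of_nat j - Z.of_nat Lam)%Z) 0 (2 * Lam).

Definition inner (Lam : nat) (u v : vec) : C :=
  sumZ Lam (fun n => Cmult (Cconj (u n)) (v n)).

Definition bcoef (Lam : nat) (k : R) (n : Z) : R :=
  if (Z.leb (1 - Z.of_nat Lam) n && Z.leb n (Z.of_nat Lam))%bool
  then sqrt (1 + IZR n * (IZR n - 1) / k) else 0.

Definition Lop (v : vec) : vec := fun n => Cmult (RtoC (IZR n)) (v n).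

(* x_+ psi_n = b_{n+1} psi_{n+1}: coefficient of psi_m in x_+ v is b_m v_{m-1} *)
Definition xplus (Lam : nat) (k : R) (v : vec) : vec :=
  fun m => Cmult (RtoC (bcoef Lam k m)) (v (m - 1)%Z).

(* x_- psi_n = b_n psi_{n-1}: coefficient of psi_m in x_- v is b_{m+1} v_{m+1} *)
Definition xminus (Lam : nat) (k : R) (v : vec) : vec :=
  fun m => Cmult (RtoC (bcoef Lam k (m + 1)%Z)) (v (m + 1)%Z).

Definition x1op (Lam : nat) (k : R) (v : vec) : vec :=
  fun m => Cdiv (Cplus (xplus Lam k v m) (xminus Lam k v m)) (RtoC 2).
Definition x2op (Lam : nat) (k : R) (v : vec) : vec :=
  fun m => Cdiv (Cminus (xplus Lam k v m) (xminus Lam k v m)) (Cmult (RtoC 2) Ci).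

Definition xsqop (Lam : nat) (k : R) (v : vec) : vec :=
  fun m => Cplus (x1op Lam k (x1op Lam k v) m) (x2op Lam k (x2op Lam k v) m).

Definition expect (Lam : nat) (A : vec -> vec) (chi : vec) : C :=
  inner Lam chi (A chi).

Definition varL (Lam : nat) (chi : vec) : C :=
  Cminus (expect Lam (fun v => Lop (Lop v)) chi)
         (Cmult (expect Lam Lop chi) (expect Lam Lop chi)).

(* (Delta x)^2 = <x^2> - <x_1>^2 - <x_2>^2 (a real number; we take its real part) *)
Definition varX (Lam : nat) (k : R) (chi : vec) : R :=
  Re (Cminus (Cminus (expect Lam (xsqop Lam k) chi)
                     (Cmult (expect Lam (x1op Lam k) chi) (expect Lam (x1op Lam k) chi)))
             (Cmult (expect Lam (x2op Lam k) chi) (expect Lam (x2op Lam k) chi))).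

Definition cexpi (t : R) : C := (cos t, sin t).

Definition omega (Lam : nat) (alpha : R) (beta : Z -> R) : vec :=
  fun m => Cdiv (cexpi (alpha * IZR m + beta m)) (RtoC (sqrt (2 * INR Lam + 1))).

Definition Pop (Lam : nat) (alpha : R) (beta : Z -> R) (v : vec) : vec :=
  fun m => Cmult (omega Lam alpha beta m) (inner Lam (omega Lam alpha beta) v).

(* On omega_alpha^beta every coordinate has modulus 1/sqrt(2 Lam + 1), so a diagonal
   operator has as expectation the plain average of its eigenvalues, whatever alpha and
   beta are; this gives (ii), and also <x^2>, since x^2 is diagonal with eigenvalues
   (b_m^2 + b_(m+1)^2)/2.  As x_- is the adjoint of x_+, <x_1> and <x_2> are the real and
   imaginary parts of <x_+>, hence (Delta x)^2 = <x^2> - |<x_+>|^2.  Now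
   <x_+> = sum_m b_m e^(i(theta_(m-1) - theta_m)) / (2 Lam + 1) with theta_m = alpha m + beta_m,
   whose modulus is at most sum_m b_m / (2 Lam + 1), with equality for beta = 0 where all
   the phases equal -alpha: this is the first half of (iii).  The explicit bound follows
   from b_(-Lam) = 0 and b_m >= 1, b_m^2 = 1 + m(m-1)/k on the other 2 Lam sites.
   Finally (i) is the orthogonality of the e^(i j alpha) on [0, 2 pi]. *)

From Stdlib Require Import Reals ZArith Lra Lia.
From Coquelicot Require Import Coquelicot.
Open Scope R_scope.

(* [sumZ] over an arbitrary abelian monoid: [sumZ Lam f] is
   [@sumW C_AbelianMonoid Lam f] by conversion.  [sumR] is its real instance, with
   result type [R] so that [ring] and [lra] recognise its equations. *)
Definition sumW {G : AbelianMonoid} (Lam : nat) (f : Z -> G) : G :=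
  sum_n_m (fun j : nat => f (Z.of_nat j - Z.of_nat Lam)%Z) 0 (2 * Lam).

Definition sumR (Lam : nat) (f : Z -> R) : R := @sumW R_AbelianMonoid Lam f.

Section WindowSums.

Context {G : AbelianMonoid}.

Lemma sumW_ext (Lam : nat) (f g : Z -> G) :
  (forall n, (- Z.of_nat Lam <= n <= Z.of_nat Lam)%Z -> f n = g n) ->
  sumW Lam f = sumW Lam g.
Proof. intros Hfg. apply sum_n_m_ext_loc. intros j Hj. apply Hfg. lia. Qed.

Lemma sumW_plus (Lam : nat) (f g : Z -> G) :
  sumW Lam (fun n => plus (f n) (g n)) = plus (sumW Lam f) (sumW Lam g).
Proof. apply sum_n_m_plus. Qed.

Lemma sumW_S (Lam : nat) (f : Z -> G) :
  sumW (S Lam) f =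
  plus (f (- Z.of_nat (S Lam))%Z) (plus (sumW Lam f) (f (Z.of_nat (S Lam)))).
Proof.
  unfold sumW. replace (2 * S Lam)%nat with (S (S (2 * Lam))) by lia.
  rewrite sum_Sn_m, sum_n_Sm by lia. rewrite <- sum_n_m_S.
  replace (Z.of_nat 0 - Z.of_nat (S Lam))%Z with (- Z.of_nat (S Lam))%Z by lia.
  replace (Z.of_nat (S (S (2 * Lam))) - Z.of_nat (S Lam))%Z with (Z.of_nat (S Lam)) by lia.
  rewrite (sum_n_m_ext _ (fun j => f (Z.of_nat j - Z.of_nat Lam)%Z)) by (intros; f_equal; lia).
  reflexivity.
Qed.

Lemma sumW_shift (Lam : nat) (f : Z -> G) :
  f (- Z.of_nat Lam)%Z = zero -> f (Z.of_nat Lam + 1)%Z = zero ->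
  sumW Lam (fun n => f (n + 1)%Z) = sumW Lam f.
Proof.
  intros Hlo Hhi. unfold sumW.
  set (g := fun j : nat => f (Z.of_nat j - Z.of_nat Lam)%Z).
  transitivity (sum_n_m g 1 (S (2 * Lam))).
  { rewrite <- sum_n_m_S. apply sum_n_m_ext. intros j. unfold g. f_equal. lia. }
  assert (Hsplit := sum_Sn_m g 0 (S (2 * Lam)) ltac:(lia)).
  rewrite sum_n_Sm in Hsplit by lia.
  replace (g 0%nat) with (@zero G) in Hsplit by (rewrite <- Hlo; unfold g; f_equal).
  replace (g (S (2 * Lam))) with (@zero G) in Hsplit by (rewrite <- Hhi; unfold g; f_equal; lia).
  rewrite plus_zero_r, plus_zero_l in Hsplit. now symmetry.
Qed.

Lemma sumW_delta (Lam : nat) (n : Z) (x : G) :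
  (- Z.of_nat Lam <= n <= Z.of_nat Lam)%Z ->
  sumW Lam (fun m => if Z.eqb m n then x else zero) = x.
Proof.
  intros Hn. unfold sumW.
  set (j0 := Z.to_nat (n + Z.of_nat Lam)).
  assert (Hj0 : (j0 <= 2 * Lam)%nat) by lia.
  rewrite (sum_n_m_ext_loc _ (fun j => if Nat.eqb j j0 then x else zero)).
  2:{ intros j _. destruct (Z.eqb_spec (Z.of_nat j - Z.of_nat Lam) n),
        (Nat.eqb_spec j j0); trivial; lia. }
  clearbody j0. induction (2 * Lam)%nat as [|M IH].
  - rewrite sum_n_n. replace j0 with 0%nat by lia. reflexivity.
  - rewrite sum_n_Sm by lia. destruct (Nat.eqb_spec (S M) j0) as [<-|Hne].
    + rewrite sum_n_m_ext_loc with (b := fun _ => zero), sum_n_m_const_zero.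
      * apply plus_zero_l.
      * intros j Hj. destruct (Nat.eqb_spec j (S M)); trivial; lia.
    + rewrite IH by lia. apply plus_zero_r.
Qed.

Lemma sumW_morph {H : AbelianMonoid} (h : G -> H) (Lam : nat) (f : Z -> G) :
  (forall x y, h (plus x y) = plus (h x) (h y)) ->
  h (sumW Lam f) = sumW Lam (fun n => h (f n)).
Proof.
  intros Hplus. unfold sumW. induction (2 * Lam)%nat as [|M IH].
  - now rewrite !sum_n_n.
  - rewrite !sum_n_Sm by lia. now rewrite Hplus, IH.
Qed.

End WindowSums.

Lemma sumW_mult_l {K : Ring} (Lam : nat) (a : K) (f : Z -> K) :
  sumW Lam (fun n => mult a (f n)) = mult a (sumW Lam f).
Proof. apply sum_n_m_mult_l. Qed.

Lemma sumR_S (Lam : nat) (f : Z -> R) :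
  sumR (S Lam) f = f (- Z.of_nat (S Lam))%Z + sumR Lam f + f (Z.of_nat (S Lam)).
Proof. unfold sumR. rewrite sumW_S. symmetry. apply Rplus_assoc. Qed.

Lemma sumR_O (f : Z -> R) : sumR 0 f = f 0%Z.
Proof. exact (sum_n_n _ 0). Qed.

Lemma sumR_ext (Lam : nat) (f g : Z -> R) :
  (forall n, (- Z.of_nat Lam <= n <= Z.of_nat Lam)%Z -> f n = g n) ->
  sumR Lam f = sumR Lam g.
Proof. exact (sumW_ext (G := R_AbelianMonoid) Lam f g). Qed.

Lemma sumR_shift (Lam : nat) (f : Z -> R) :
  f (- Z.of_nat Lam)%Z = 0 -> f (Z.of_nat Lam + 1)%Z = 0 ->
  sumR Lam (fun n => f (n + 1)%Z) = sumR Lam f.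
Proof. exact (sumW_shift (G := R_AbelianMonoid) Lam f). Qed.

Lemma sumR_plus (Lam : nat) (f g : Z -> R) :
  sumR Lam (fun n => f n + g n) = sumR Lam f + sumR Lam g.
Proof. exact (sumW_plus Lam f g). Qed.

Lemma sumR_mult_l (Lam : nat) (a : R) (f : Z -> R) :
  sumR Lam (fun n => a * f n) = a * sumR Lam f.
Proof. exact (sumW_mult_l (K := R_Ring) Lam a f). Qed.

Lemma sumR_le (Lam : nat) (f g : Z -> R) :
  (forall n, (- Z.of_nat Lam <= n <= Z.of_nat Lam)%Z -> f n <= g n) ->
  sumR Lam f <= sumR Lam g.
Proof.
  intros Hfg. unfold sumR, sumW.
  assert (Hj : forall j, (j <= 2 * Lam)%nat ->
            f (Z.of_nat j - Z.of_nat Lam)%Z <= g (Z.of_nat j - Z.of_nat Lam)%Z)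
    by (intros j Hj; apply Hfg; lia).
  induction (2 * Lam)%nat as [|M IH].
  - rewrite !sum_n_n. now apply Hj.
  - rewrite !sum_n_Sm by lia. apply Rplus_le_compat; [apply IH|apply Hj]; intros; auto.
Qed.

Lemma sumR_const (Lam : nat) (c : R) : sumR Lam (fun _ => c) = (2 * INR Lam + 1) * c.
Proof.
  induction Lam as [|Lam IH].
  - rewrite sumR_O. simpl. ring.
  - rewrite sumR_S, IH, S_INR. ring.
Qed.

Lemma sumR_id (Lam : nat) : sumR Lam (fun n => IZR n) = 0.
Proof.
  induction Lam as [|Lam IH].
  - apply sumR_O.
  - rewrite sumR_S, IH, opp_IZR, <- INR_IZR_INZ. ring.
Qed.

Lemma sumR_sqr (Lam : nat) :
  sumR Lam (fun n => IZR n ^ 2) = INR Lam * (INR Lam + 1) * (2 * INR Lam + 1) / 3.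
Proof.
  induction Lam as [|Lam IH].
  - rewrite sumR_O. simpl. field.
  - rewrite sumR_S, IH, opp_IZR, <- INR_IZR_INZ, S_INR. field.
Qed.

Lemma sumR_delta (Lam : nat) (n : Z) (x : R) :
  (- Z.of_nat Lam <= n <= Z.of_nat Lam)%Z ->
  sumR Lam (fun m => if Z.eqb m n then x else 0) = x.
Proof. exact (sumW_delta (G := R_AbelianMonoid) Lam n x). Qed.

Lemma sumZ_plus (Lam : nat) (f g : Z -> C) :
  sumZ Lam (fun n => Cplus (f n) (g n)) = Cplus (sumZ Lam f) (sumZ Lam g).
Proof. exact (sumW_plus (G := C_AbelianMonoid) Lam f g). Qed.

Lemma sumZ_mult_l (Lam : nat) (a : C) (f : Z -> C) :
  sumZ Lam (fun n => Cmult a (f n)) = Cmult a (sumZ Lam f).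
Proof. exact (sumW_mult_l (K := C_Ring) Lam a f). Qed.

Lemma sumZ_RtoC (Lam : nat) (f : Z -> R) : sumZ Lam (fun n => RtoC (f n)) = RtoC (sumR Lam f).
Proof.
  symmetry. apply (sumW_morph (G := R_AbelianMonoid) (H := C_AbelianMonoid) RtoC), RtoC_plus.
Qed.

Lemma sumZ_conj (Lam : nat) (f : Z -> C) : Cconj (sumZ Lam f) = sumZ Lam (fun n => Cconj (f n)).
Proof. apply (sumW_morph (G := C_AbelianMonoid) (H := C_AbelianMonoid) Cconj), Cplus_conj. Qed.

Lemma sumZ_delta (Lam : nat) (n : Z) (x : C) :
  (- Z.of_nat Lam <= n <= Z.of_nat Lam)%Z ->
  sumZ Lam (fun m => if Z.eqb m n then x else RtoC 0) = x.
Proof. exact (sumW_delta (G := C_AbelianMonoid) Lam n x). Qed.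

Lemma sumZ_ext (Lam : nat) (f g : Z -> C) :
  (forall n, (- Z.of_nat Lam <= n <= Z.of_nat Lam)%Z -> f n = g n) ->
  sumZ Lam f = sumZ Lam g.
Proof. exact (sumW_ext (G := C_AbelianMonoid) Lam f g). Qed.

Lemma sumZ_shift (Lam : nat) (f : Z -> C) :
  f (- Z.of_nat Lam)%Z = RtoC 0 -> f (Z.of_nat Lam + 1)%Z = RtoC 0 ->
  sumZ Lam (fun n => f (n + 1)%Z) = sumZ Lam f.
Proof. exact (sumW_shift (G := C_AbelianMonoid) Lam f). Qed.

Lemma inner_ext (Lam : nat) (u v w : vec) :
  (forall m, (- Z.of_nat Lam <= m <= Z.of_nat Lam)%Z -> v m = w m) ->
  inner Lam u v = inner Lam u w.
Proof. intros Hvw. apply sumZ_ext. intros m Hm. now rewrite Hvw. Qed.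

Lemma inner_lincomb (Lam : nat) (u v w : vec) (a b : C) :
  inner Lam u (fun m => Cplus (Cmult a (v m)) (Cmult b (w m))) =
  Cplus (Cmult a (inner Lam u v)) (Cmult b (inner Lam u w)).
Proof.
  unfold inner. rewrite <- !sumZ_mult_l, <- sumZ_plus.
  apply sumZ_ext. intros m _. ring.
Qed.

Lemma bcoef_nonneg (Lam : nat) (k : R) (m : Z) : 0 <= bcoef Lam k m.
Proof. unfold bcoef. destruct (_ && _)%bool; [apply sqrt_pos|lra]. Qed.

Lemma bcoef_lo (Lam : nat) (k : R) : bcoef Lam k (- Z.of_nat Lam) = 0.
Proof.
  unfold bcoef. replace (Z.leb _ _) with false; [reflexivity|].
  symmetry; apply Z.leb_gt; lia.
Qed.

Lemma bcoef_hi (Lam : nat) (k : R) : bcoef Lam k (Z.of_nat Lam + 1) = 0.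
Proof.
  unfold bcoef. replace (Z.leb (Z.of_nat Lam + 1) _) with false.
  - now rewrite Bool.andb_false_r.
  - symmetry; apply Z.leb_gt; lia.
Qed.

Lemma Cconj_RtoC (r : R) : Cconj (RtoC r) = RtoC r.
Proof. apply injective_projections; simpl; ring. Qed.

Lemma xminus_adjoint (Lam : nat) (k : R) (u v : vec) :
  inner Lam u (xminus Lam k v) = Cconj (inner Lam v (xplus Lam k u)).
Proof.
  set (F := fun m => Cmult (Cconj (u (m - 1)%Z)) (Cmult (RtoC (bcoef Lam k m)) (v m))).
  transitivity (sumZ Lam (fun m => F (m + 1)%Z)).
  { apply sumZ_ext. intros m _. unfold F. now replace (m + 1 - 1)%Z with m by lia. }
  rewrite sumZ_shift.
  - unfold inner. rewrite sumZ_conj. apply sumZ_ext. intros m _. unfold F, xplus.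
    rewrite !Cmult_conj, Cconj_conj, Cconj_RtoC. ring.
  - unfold F. rewrite bcoef_lo. apply injective_projections; simpl; ring.
  - unfold F. rewrite bcoef_hi. apply injective_projections; simpl; ring.
Qed.

Lemma expect_x1 (Lam : nat) (k : R) (chi : vec) :
  expect Lam (x1op Lam k) chi = RtoC (Re (expect Lam (xplus Lam k) chi)).
Proof.
  unfold expect. rewrite re_alt, <- xminus_adjoint.
  rewrite (inner_ext _ _ _ (fun m => Cplus (Cmult (/ 2) (xplus Lam k chi m))
                                            (Cmult (/ 2) (xminus Lam k chi m)))).
  - rewrite inner_lincomb. field.
  - intros m _. unfold x1op. field.
Qed.

Lemma expect_x2 (Lam : nat) (k : R) (chi : vec) :
  expect Lam (x2op Lam k) chi = RtoC (Im (expect Lam (xplus Lam k) chi)).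
Proof.
  assert (HCi : Ci <> RtoC 0) by (intros H; injection H; lra).
  unfold expect. rewrite im_alt, <- xminus_adjoint.
  rewrite (inner_ext _ _ _ (fun m => Cplus (Cmult (/ (2 * Ci)) (xplus Lam k chi m))
                                            (Cmult (- / (2 * Ci)) (xminus Lam k chi m)))).
  - rewrite inner_lincomb. now field.
  - intros m _. unfold x2op. now field.
Qed.

Lemma xsqop_diag (Lam : nat) (k : R) (v : vec) (m : Z) :
  xsqop Lam k v m = Cmult (RtoC ((bcoef Lam k m ^ 2 + bcoef Lam k (m + 1) ^ 2) / 2)) (v m).
Proof.
  unfold xsqop, x1op, x2op, xplus, xminus.
  replace (m - 1 + 1)%Z with m by lia. replace (m + 1 - 1)%Z with m by lia.
  apply injective_projections; simpl; field.
Qed.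

Lemma varX_eq (Lam : nat) (k : R) (chi : vec) :
  varX Lam k chi =
  Re (expect Lam (xsqop Lam k) chi) - Cmod (expect Lam (xplus Lam k) chi) ^ 2.
Proof.
  unfold varX. rewrite expect_x1, expect_x2.
  set (E := expect Lam (xplus Lam k) chi).
  unfold Cmod. rewrite pow2_sqrt by nra. simpl. ring.
Qed.

Definition phase (alpha : R) (beta : Z -> R) (m : Z) : R := alpha * IZR m + beta m.

Lemma cexpi_add (s t : R) : cexpi (s + t) = Cmult (cexpi s) (cexpi t).
Proof. unfold cexpi. rewrite cos_plus, sin_plus. apply injective_projections; simpl; ring. Qed.

Lemma Cmod_cexpi (t : R) : Cmod (cexpi t) = 1.
Proof.
  unfold Cmod, cexpi. transitivity (sqrt 1); [f_equal|apply sqrt_1]. simpl.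
  pose proof (sin2_cos2 t) as H. unfold Rsqr in H. lra.
Qed.

Lemma omega_conj_mul (Lam : nat) (alpha : R) (beta : Z -> R) (m n : Z) :
  Cmult (Cconj (omega Lam alpha beta m)) (omega Lam alpha beta n) =
  Cmult (RtoC (/ (2 * INR Lam + 1))) (cexpi (phase alpha beta n - phase alpha beta m)).
Proof.
  assert (HN : 0 < 2 * INR Lam + 1) by (pose proof (pos_INR Lam); lra).
  pose proof (sqrt_lt_R0 _ HN) as Hs. pose proof (sqrt_sqrt _ (Rlt_le _ _ HN)) as Hss.
  set (s := sqrt (2 * INR Lam + 1)) in *. rewrite <- Hss.
  unfold omega, phase, cexpi. fold s. rewrite cos_minus, sin_minus.
  apply injective_projections; simpl; field; lra.
Qed.

Lemma omega_normsq (Lam : nat) (alpha : R) (beta : Z -> R) (m : Z) :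
  Cmult (Cconj (omega Lam alpha beta m)) (omega Lam alpha beta m) = RtoC (/ (2 * INR Lam + 1)).
Proof.
  rewrite omega_conj_mul, Rminus_diag. unfold cexpi. rewrite cos_0, sin_0.
  apply injective_projections; simpl; ring.
Qed.

Lemma inner_omega_diag (Lam : nat) (alpha : R) (beta : Z -> R) (d : Z -> R) :
  inner Lam (omega Lam alpha beta) (fun m => Cmult (RtoC (d m)) (omega Lam alpha beta m)) =
  RtoC (sumR Lam d / (2 * INR Lam + 1)).
Proof.
  unfold inner. rewrite (sumZ_ext _ _ (fun m => RtoC (/ (2 * INR Lam + 1) * d m))).
  - rewrite sumZ_RtoC, sumR_mult_l. f_equal. unfold Rdiv. ring.
  - intros m _. rewrite RtoC_mult, <- (omega_normsq Lam alpha beta m). ring.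
Qed.

Lemma expect_L_omega (Lam : nat) (alpha : R) (beta : Z -> R) :
  expect Lam Lop (omega Lam alpha beta) = RtoC 0.
Proof.
  unfold expect, Lop. rewrite inner_omega_diag, sumR_id. f_equal. unfold Rdiv. ring.
Qed.

Lemma varL_omega (Lam : nat) (alpha : R) (beta : Z -> R) :
  varL Lam (omega Lam alpha beta) = RtoC (INR Lam * (INR Lam + 1) / 3).
Proof.
  assert (HN : 0 < 2 * INR Lam + 1) by (pose proof (pos_INR Lam); lra).
  unfold varL. rewrite expect_L_omega. unfold expect.
  rewrite (inner_ext _ _ _ (fun n => Cmult (RtoC (IZR n ^ 2)) (omega Lam alpha beta n))).
  - rewrite inner_omega_diag, sumR_sqr.
    apply injective_projections; simpl; field; lra.
  - intros n _. unfold Lop. rewrite RtoC_pow. ring.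
Qed.

Lemma expect_xsq_omega (Lam : nat) (k : R) (alpha : R) (beta : Z -> R) :
  expect Lam (xsqop Lam k) (omega Lam alpha beta) =
  RtoC (sumR Lam (fun m => bcoef Lam k m ^ 2) / (2 * INR Lam + 1)).
Proof.
  unfold expect. rewrite (inner_ext _ _ _ _ (fun m _ => xsqop_diag Lam k _ m)), inner_omega_diag.
  do 2 f_equal. set (f := fun m => bcoef Lam k m ^ 2).
  transitivity (sumR Lam (fun m => / 2 * f m + / 2 * f (m + 1)%Z)).
  { apply sumR_ext. intros m _. unfold f. field. }
  rewrite sumR_plus, !sumR_mult_l.
  rewrite sumR_shift.
  - field.
  - unfold f. rewrite bcoef_lo. ring.
  - unfold f. rewrite bcoef_hi. ring.
Qed.

Lemma expect_xplus_omega (Lam : nat) (k : R) (alpha : R) (beta : Z -> R) :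
  expect Lam (xplus Lam k) (omega Lam alpha beta) =
  sumZ Lam (fun m => Cmult (RtoC (bcoef Lam k m / (2 * INR Lam + 1)))
                           (cexpi (phase alpha beta (m - 1) - phase alpha beta m))).
Proof.
  apply sumZ_ext. intros m _. unfold xplus.
  transitivity (Cmult (RtoC (bcoef Lam k m))
                  (Cmult (Cconj (omega Lam alpha beta m)) (omega Lam alpha beta (m - 1)%Z)));
    [ring|].
  rewrite omega_conj_mul. unfold Rdiv. rewrite RtoC_mult. ring.
Qed.

Lemma Cmod_sumZ_le (Lam : nat) (f : Z -> C) :
  Cmod (sumZ Lam f) <= sumR Lam (fun m => Cmod (f m)).
Proof.
  rewrite Cmod_norm. eapply Rle_trans; [apply (norm_sum_n_m (V := C_R_NormedModule))|].
  right. apply sum_n_m_ext. intros j. now rewrite Cmod_norm.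
Qed.

Lemma Cmod_expect_xplus_omega_le (Lam : nat) (k : R) (alpha : R) (beta : Z -> R) :
  Cmod (expect Lam (xplus Lam k) (omega Lam alpha beta)) <=
  sumR Lam (bcoef Lam k) / (2 * INR Lam + 1).
Proof.
  assert (HN : 0 < 2 * INR Lam + 1) by (pose proof (pos_INR Lam); lra).
  rewrite expect_xplus_omega. eapply Rle_trans; [apply Cmod_sumZ_le|].
  right. unfold Rdiv. rewrite (Rmult_comm (sumR _ _)), <- sumR_mult_l. apply sumR_ext. intros m _.
  rewrite Cmod_mult, Cmod_cexpi, Cmod_R, Rabs_pos_eq.
  - ring.
  - apply Rdiv_le_0_compat; [apply bcoef_nonneg|lra].
Qed.

Lemma expect_xplus_omega_0 (Lam : nat) (k : R) (alpha : R) :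
  expect Lam (xplus Lam k) (omega Lam alpha (fun _ => 0)) =
  Cmult (RtoC (sumR Lam (bcoef Lam k) / (2 * INR Lam + 1))) (cexpi (- alpha)).
Proof.
  rewrite expect_xplus_omega.
  replace (sumR Lam (bcoef Lam k) / (2 * INR Lam + 1))
    with (sumR Lam (fun m => bcoef Lam k m / (2 * INR Lam + 1))).
  - rewrite <- sumZ_RtoC, Cmult_comm, <- sumZ_mult_l. apply sumZ_ext. intros m _.
    unfold phase. rewrite minus_IZR. replace (_ - _) with (- alpha) by ring. ring.
  - unfold Rdiv. rewrite (Rmult_comm (sumR _ _)), <- sumR_mult_l. apply sumR_ext. intros. ring.
Qed.

Lemma varX_omega (Lam : nat) (k : R) (alpha : R) (beta : Z -> R) :
  varX Lam k (omega Lam alpha beta) =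
  sumR Lam (fun m => bcoef Lam k m ^ 2) / (2 * INR Lam + 1)
  - Cmod (expect Lam (xplus Lam k) (omega Lam alpha beta)) ^ 2.
Proof. now rewrite varX_eq, expect_xsq_omega. Qed.

Lemma varX_omega_0 (Lam : nat) (k : R) (alpha : R) :
  varX Lam k (omega Lam alpha (fun _ => 0)) =
  sumR Lam (fun m => bcoef Lam k m ^ 2) / (2 * INR Lam + 1)
  - (sumR Lam (bcoef Lam k) / (2 * INR Lam + 1)) ^ 2.
Proof.
  rewrite varX_omega, expect_xplus_omega_0, Cmod_mult, Cmod_cexpi, Cmod_R, Rmult_1_r, pow2_abs.
  reflexivity.
Qed.

Lemma varX_omega_ge (Lam : nat) (k : R) (alpha : R) (beta : Z -> R) :
  varX Lam k (omega Lam alpha beta) >= varX Lam k (omega Lam alpha (fun _ => 0)).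
Proof.
  rewrite varX_omega, varX_omega_0.
  pose proof (Cmod_expect_xplus_omega_le Lam k alpha beta).
  pose proof (Cmod_ge_0 (expect Lam (xplus Lam k) (omega Lam alpha beta))).
  apply Rle_ge, Rplus_le_compat_l, Ropp_le_contravar, pow_incr. lra.
Qed.

Lemma Rinv_nonneg (x : R) : 0 <= x -> 0 <= / x.
Proof.
  intros [Hx|<-].
  - now apply Rlt_le, Rinv_0_lt_compat.
  - rewrite Rinv_0. apply Rle_refl.
Qed.

Lemma IZR_mul_pred_nonneg (m : Z) : 0 <= IZR m * (IZR m - 1).
Proof.
  destruct (Z_le_gt_dec m 0) as [Hm|Hm].
  - apply IZR_le in Hm. nra.
  - assert (1 <= IZR m) by (apply IZR_le; lia). nra.
Qed.

Lemma bcoef_interior (Lam : nat) (k : R) (m : Z) :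
  0 <= k -> (1 - Z.of_nat Lam <= m <= Z.of_nat Lam)%Z ->
  1 <= bcoef Lam k m /\ bcoef Lam k m ^ 2 = 1 + IZR m * (IZR m - 1) / k.
Proof.
  intros Hk Hm.
  assert (Ht : 0 <= IZR m * (IZR m - 1) / k)
    by (apply Rmult_le_pos; [apply IZR_mul_pred_nonneg|now apply Rinv_nonneg]).
  unfold bcoef. replace (_ && _)%bool with true
    by (symmetry; apply andb_true_intro; split; apply Z.leb_le; lia).
  split.
  - rewrite <- sqrt_1 at 1. apply sqrt_le_1_alt. lra.
  - apply pow2_sqrt. lra.
Qed.

Lemma sumR_bcoef_ge (Lam : nat) (k : R) : 0 <= k -> 2 * INR Lam <= sumR Lam (bcoef Lam k).
Proof.
  intros Hk.
  (* b vanishes at m = -Lam only; adding the indicator of that site gives a bound on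
     the whole window. *)
  assert (H : sumR Lam (fun _ => 1) <=
              sumR Lam (fun m => bcoef Lam k m + (if Z.eqb m (- Z.of_nat Lam) then 1 else 0))).
  { apply sumR_le. intros m Hm. destruct (Z.eqb_spec m (- Z.of_nat Lam)).
    - pose proof (bcoef_nonneg Lam k m). lra.
    - destruct (bcoef_interior Lam k m Hk ltac:(lia)). lra. }
  rewrite sumR_const, sumR_plus, sumR_delta in H by lia. lra.
Qed.

Lemma sumR_bcoef_sqr_le (Lam : nat) (k : R) :
  0 <= k ->
  sumR Lam (fun m => bcoef Lam k m ^ 2) <=
  2 * INR Lam + INR Lam * (INR Lam + 1) * (2 * INR Lam + 1) / (3 * k).
Proof.
  intros Hk.
  assert (H : sumR Lam (fun m => bcoef Lam k m ^ 2 + (if Z.eqb m (- Z.of_nat Lam) then 1 else 0)) <=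
              sumR Lam (fun m => 1 + (/ k * IZR m ^ 2 + - / k * IZR m))).
  { apply sumR_le. intros m Hm.
    pose proof (IZR_mul_pred_nonneg m). pose proof (Rinv_nonneg k Hk).
    destruct (Z.eqb_spec m (- Z.of_nat Lam)) as [->|Hne].
    - rewrite bcoef_lo. nra.
    - destruct (bcoef_interior Lam k m Hk ltac:(lia)) as [_ ->]. unfold Rdiv. nra. }
  rewrite !sumR_plus, sumR_delta, sumR_const, !sumR_mult_l, sumR_sqr, sumR_id in H by lia.
  destruct (Req_dec k 0) as [->|Hk0].
  - rewrite Rmult_0_r. unfold Rdiv. rewrite Rinv_0 in *. lra.
  - replace (_ / (3 * k)) with (/ k * (INR Lam * (INR Lam + 1) * (2 * INR Lam + 1) / 3))
      by (field; lra). lra.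
Qed.

Lemma variance_bound (L k S1 S2 : R) :
  1 <= L -> L ^ 2 * (L + 1) ^ 2 <= k ->
  2 * L <= S1 -> S2 <= 2 * L + L * (L + 1) * (2 * L + 1) / (3 * k) ->
  S2 / (2 * L + 1) - (S1 / (2 * L + 1)) ^ 2 < 1 / (L + 1) * (1 / 2 + 1 / (3 * L)).
Proof.
  intros HL Hk HS1 HS2.
  assert (0 < L ^ 2 * (L + 1) ^ 2) by (apply Rmult_lt_0_compat; apply pow_lt; lra).
  assert (Hk0 : 0 < k) by lra.
  assert (HS2' : S2 / (2 * L + 1) <= 2 * L / (2 * L + 1) + L * (L + 1) / (3 * k)).
  { replace (2 * L / (2 * L + 1) + L * (L + 1) / (3 * k))
      with ((2 * L + L * (L + 1) * (2 * L + 1) / (3 * k)) / (2 * L + 1)) by (field; lra).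
    apply Rmult_le_compat_r; [apply Rlt_le, Rinv_0_lt_compat; lra|exact HS2]. }
  assert (HS1' : (2 * L / (2 * L + 1)) ^ 2 <= (S1 / (2 * L + 1)) ^ 2).
  { apply pow_incr. split; unfold Rdiv; [apply Rmult_le_pos|apply Rmult_le_compat_r];
      try apply Rlt_le, Rinv_0_lt_compat; lra. }
  assert (Hk' : L * (L + 1) / (3 * k) <= 1 / (3 * L * (L + 1))).
  { unfold Rdiv. apply Rle_trans with (L * (L + 1) * / (3 * (L ^ 2 * (L + 1) ^ 2))).
    - apply Rmult_le_compat_l; [nra|]. apply Rinv_le_contravar; nra.
    - right. field. lra. }
  assert (Hmain : 2 * L / (2 * L + 1) - (2 * L / (2 * L + 1)) ^ 2 < 1 / (2 * (L + 1))).
  { replace (1 / (2 * (L + 1)))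
      with (2 * L / (2 * L + 1) - (2 * L / (2 * L + 1)) ^ 2
            + 1 / (2 * (L + 1) * (2 * L + 1) ^ 2)) by (field; lra).
    assert (0 < 1 / (2 * (L + 1) * (2 * L + 1) ^ 2)).
    { apply Rdiv_lt_0_compat; [lra|]. apply Rmult_lt_0_compat; [lra|apply pow_lt; lra]. }
    lra. }
  replace (1 / (L + 1) * (1 / 2 + 1 / (3 * L))) with (1 / (2 * (L + 1)) + 1 / (3 * L * (L + 1)))
    by (field; lra).
  lra.
Qed.

Lemma varX_omega_0_lt (Lam : nat) (k alpha : R) :
  INR Lam ^ 2 * (INR Lam + 1) ^ 2 <= k ->
  varX Lam k (omega Lam alpha (fun _ => 0))
    < 1 / (INR Lam + 1) * (1 / 2 + 1 / (3 * INR Lam)).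
Proof.
  intros Hk.
  assert (Hk0 : 0 <= k).
  { pose proof (pos_INR Lam). assert (0 <= INR Lam ^ 2 * (INR Lam + 1) ^ 2) by
      (apply Rmult_le_pos; apply pow_le; lra). lra. }
  rewrite varX_omega_0.
  pose proof (sumR_bcoef_ge Lam k Hk0) as HS1.
  pose proof (sumR_bcoef_sqr_le Lam k Hk0) as HS2.
  destruct Lam as [|L].
  - (* Both sides degenerate: x_+ = 0, and 1 / (3 * 0) = 0 in Rocq, so the claim is 0 < 1/2. *)
    pose proof (pow2_ge_0 (sumR 0 (bcoef 0 k) / (2 * INR 0 + 1))).
    simpl INR in *. unfold Rdiv in *. rewrite !Rmult_0_r, Rinv_0, Rplus_0_l, Rinv_1 in *. lra.
  - apply (variance_bound _ k); trivial. rewrite S_INR. pose proof (pos_INR L). lra.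
Qed.

Lemma bound_le_two_thirds (L : R) :
  2 <= L -> 1 / (L + 1) * (1 / 2 + 1 / (3 * L)) <= 2 / (3 * (L + 1)).
Proof.
  intros HL.
  replace (2 / (3 * (L + 1))) with (1 / (L + 1) * (1 / 2 + 1 / 6)) by (field; lra).
  apply Rmult_le_compat_l; [apply Rlt_le, Rdiv_lt_0_compat; lra|].
  apply Rplus_le_compat_l. unfold Rdiv. rewrite !Rmult_1_l. apply Rinv_le_contravar; lra.
Qed.

Lemma sin_IZR_mul_PI (j : Z) : sin (IZR j * PI) = 0.
Proof. apply sin_eq_0_1. now exists j. Qed.

Lemma sin_IZR_mul_2PI (j : Z) : sin (IZR j * (2 * PI)) = 0.
Proof.
  replace (IZR j * (2 * PI)) with (IZR (2 * j) * PI) by (rewrite mult_IZR; ring).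
  apply sin_IZR_mul_PI.
Qed.

Lemma cos_IZR_mul_2PI (j : Z) : cos (IZR j * (2 * PI)) = 1.
Proof.
  replace (IZR j * (2 * PI)) with (2 * (IZR j * PI)) by ring.
  rewrite cos_2a_sin, sin_IZR_mul_PI. ring.
Qed.

Lemma is_RInt_Cmult_l (c : C) (f : R -> C) (a b : R) (l : C) :
  is_RInt (V := C_R_NormedModule) f a b l ->
  is_RInt (V := C_R_NormedModule) (fun t => Cmult c (f t)) a b (Cmult c l).
Proof.
  intros Hf.
  pose proof (is_RInt_fct_extend_fst (U := R_NormedModule) (V := R_NormedModule) f a b l Hf) as H1.
  pose proof (is_RInt_fct_extend_snd (U := R_NormedModule) (V := R_NormedModule) f a b l Hf) as H2.
  apply (is_RInt_fct_extend_pair (U := R_NormedModule) (V := R_NormedModule)); simpl.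
  - exact (is_RInt_minus _ _ _ _ _ _ (is_RInt_scal _ _ _ (fst c) _ H1)
                                      (is_RInt_scal _ _ _ (snd c) _ H2)).
  - exact (is_RInt_plus _ _ _ _ _ _ (is_RInt_scal _ _ _ (fst c) _ H2)
                                     (is_RInt_scal _ _ _ (snd c) _ H1)).
Qed.

Lemma is_RInt_derive_eq_ends (F f : R -> R) (a b : R) :
  (forall t, is_derive F t (f t)) -> (forall t, continuous f t) -> F b = F a ->
  is_RInt f a b 0.
Proof.
  intros HF Hf Hab.
  pose proof (is_RInt_derive (V := R_CompleteNormedModule) F f a b
                (fun t _ => HF t) (fun t _ => Hf t)) as H.
  unfold minus, plus, opp in H. simpl in H. rewrite Hab, Rplus_opp_r in H. exact H.
Qed.

Lemma is_RInt_cexpi_Z (j : Z) :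
  is_RInt (V := C_R_NormedModule) (fun t => cexpi (IZR j * t)) 0 (2 * PI)
          (if Z.eqb j 0 then RtoC (2 * PI) else RtoC 0).
Proof.
  destruct (Z.eqb_spec j 0) as [->|Hj].
  - apply (is_RInt_ext (fun _ => RtoC 1)).
    { intros t _. unfold cexpi. rewrite Rmult_0_l, cos_0, sin_0. reflexivity. }
    replace (RtoC (2 * PI)) with (scal (2 * PI - 0) (RtoC 1))
      by (rewrite scal_R_Cmult, Rminus_0_r; apply Cmult_1_r).
    exact (is_RInt_const (V := C_R_NormedModule) 0 (2 * PI) (RtoC 1)).
  - assert (Hj' : IZR j <> 0) by now apply not_0_IZR.
    apply (is_RInt_fct_extend_pair (U := R_NormedModule) (V := R_NormedModule)); simpl.
    + apply (is_RInt_derive_eq_ends (fun t => sin (IZR j * t) / IZR j)).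
      * intros t. auto_derive; [trivial|field; trivial].
      * intros t. apply (ex_derive_continuous (K := R_AbsRing) (V := R_NormedModule)).
        auto_derive. trivial.
      * rewrite sin_IZR_mul_2PI, Rmult_0_r, sin_0. reflexivity.
    + apply (is_RInt_derive_eq_ends (fun t => - cos (IZR j * t) / IZR j)).
      * intros t. auto_derive; [trivial|field; trivial].
      * intros t. apply (ex_derive_continuous (K := R_AbsRing) (V := R_NormedModule)).
        auto_derive. trivial.
      * rewrite cos_IZR_mul_2PI, Rmult_0_r, cos_0. reflexivity.
Qed.

Lemma is_RInt_sumZ (Lam : nat) (f : Z -> R -> C) (l : Z -> C) (a b : R) :
  (forall m, (- Z.of_nat Lam <= m <= Z.of_nat Lam)%Z ->
     is_RInt (V := C_R_NormedModule) (f m) a b (l m)) ->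
  is_RInt (V := C_R_NormedModule) (fun t => sumZ Lam (fun m => f m t)) a b (sumZ Lam l).
Proof.
  intros Hf. unfold sumZ.
  assert (Hj : forall j, (j <= 2 * Lam)%nat ->
            is_RInt (f (Z.of_nat j - Z.of_nat Lam)%Z) a b (l (Z.of_nat j - Z.of_nat Lam)%Z))
    by (intros j Hj; apply Hf; lia).
  induction (2 * Lam)%nat as [|M IH].
  - apply (is_RInt_ext (f (- Z.of_nat Lam)%Z)).
    + intros t _. now rewrite sum_n_n.
    + rewrite sum_n_n. now apply (Hj 0%nat).
  - set (g := fun j t => f (Z.of_nat j - Z.of_nat Lam)%Z t).
    apply (is_RInt_ext (fun t => plus (sum_n_m (G := C_AbelianMonoid) (fun j => g j t) 0 M)
                                      (g (S M) t))).
    + intros t _. now rewrite sum_n_Sm by lia.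
    + rewrite sum_n_Sm by lia. apply (is_RInt_plus (V := C_R_NormedModule)).
      * apply IH. intros; apply Hj; lia.
      * apply Hj; lia.
Qed.

Lemma Pop_fourier (Lam : nat) (alpha : R) (beta : Z -> R) (v : vec) (n : Z) :
  Pop Lam alpha beta v n =
  sumZ Lam (fun m => Cmult (Cmult (RtoC (/ (2 * INR Lam + 1)))
                                  (Cmult (cexpi (beta n - beta m)) (v m)))
                           (cexpi (IZR (n - m) * alpha))).
Proof.
  unfold Pop, inner. rewrite <- sumZ_mult_l. apply sumZ_ext. intros m _.
  transitivity (Cmult (Cmult (Cconj (omega Lam alpha beta m)) (omega Lam alpha beta n)) (v m));
    [ring|].
  rewrite omega_conj_mul.
  replace (phase alpha beta n - phase alpha beta m) with (IZR (n - m) * alpha + (beta n - beta m))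
    by (unfold phase; rewrite minus_IZR; ring).
  rewrite cexpi_add. ring.
Qed.

Lemma Pop_resolution_of_identity (Lam : nat) (beta : Z -> R) (v : vec) (n : Z) :
  (- Z.of_nat Lam <= n <= Z.of_nat Lam)%Z ->
  Cmult (RtoC ((2 * INR Lam + 1) / (2 * PI)))
        (RInt (V := C_R_CompleteNormedModule) (fun alpha => Pop Lam alpha beta v n) 0 (2 * PI))
  = v n.
Proof.
  intros Hn.
  set (c := fun m => Cmult (RtoC (/ (2 * INR Lam + 1))) (Cmult (cexpi (beta n - beta m)) (v m))).
  set (I := sumZ Lam (fun m => Cmult (c m) (if Z.eqb (n - m) 0 then RtoC (2 * PI) else RtoC 0))).
  assert (HI : is_RInt (V := C_R_CompleteNormedModule)
                 (fun alpha => Pop Lam alpha beta v n) 0 (2 * PI) I).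
  { apply (is_RInt_ext
             (fun alpha => sumZ Lam (fun m => Cmult (c m) (cexpi (IZR (n - m) * alpha))))).
    - intros alpha _. symmetry. apply Pop_fourier.
    - apply is_RInt_sumZ. intros m _. apply is_RInt_Cmult_l, is_RInt_cexpi_Z. }
  assert (HIn : I = Cmult (c n) (RtoC (2 * PI))).
  { rewrite <- (sumZ_delta Lam n (Cmult (c n) (RtoC (2 * PI)))) by exact Hn.
    apply sumZ_ext. intros m _.
    destruct (Z.eqb_spec (n - m) 0), (Z.eqb_spec m n); try lia.
    - now subst.
    - apply Cmult_0_r. }
  rewrite (is_RInt_unique _ _ _ _ HI), HIn. unfold c.
  rewrite Rminus_diag. unfold cexpi. rewrite cos_0, sin_0.
  pose proof PI_RGT_0. pose proof (pos_INR Lam).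
  apply injective_projections; simpl; field; lra.
Qed.

Theorem mainTheorem5 (Lam : nat) (k : R)
  (hk : k >= INR Lam ^ 2 * (INR Lam + 1) ^ 2) :
  (* (i) I = (2Lam+1)/(2pi) int_0^{2pi} P_alpha^beta d alpha, for every beta *)
  (forall (beta : Z -> R) (v : vec) (n : Z),
      (- Z.of_nat Lam <= n <= Z.of_nat Lam)%Z ->
      Cmult (RtoC ((2 * INR Lam + 1) / (2 * PI)))
            (@RInt C_R_CompleteNormedModule
                   (fun alpha => Pop Lam alpha beta v n) 0 (2 * PI)) = v n) /\
  (* (ii) *)
  (forall (alpha : R) (beta : Z -> R), 0 <= alpha < 2 * PI ->
      expect Lam Lop (omega Lam alpha beta) = RtoC 0 /\
      varL Lam (omega Lam alpha beta) = RtoC (INR Lam * (INR Lam + 1) / 3)) /\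
  (* (iii) *)
  (forall (alpha : R) (beta : Z -> R), 0 <= alpha < 2 * PI ->
      varX Lam k (omega Lam alpha beta) >= varX Lam k (omega Lam alpha (fun _ => 0))) /\
  (forall alpha : R, 0 <= alpha < 2 * PI ->
      varX Lam k (omega Lam alpha (fun _ => 0))
        < 1 / (INR Lam + 1) * (1 / 2 + 1 / (3 * INR Lam))) /\
  ((2 <= Lam)%nat ->
      1 / (INR Lam + 1) * (1 / 2 + 1 / (3 * INR Lam)) <= 2 / (3 * (INR Lam + 1))).
Proof.
  split; [|split; [|split; [|split]]].
  - intros beta v n Hn. now apply Pop_resolution_of_identity.
  - intros alpha beta _. split; [apply expect_L_omega|apply varL_omega].
  - intros alpha beta _. apply varX_omega_ge.
  - intros alpha _. apply varX_omega_0_lt. now apply Rge_le.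
  - intros HLam. apply bound_le_two_thirds.
    apply le_INR in HLam. simpl in HLam. lra.
Qed.
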